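(* Let $G=K(n_1,\dots,n_s)$ be a complete $s$-partite graph ($s\ge 2$) with parts $V_1,\dots,V_s$, $|V_j|=n_j$, $n_1\ge n_2\ge\cdots\ge n_s$, such that $3\le n_1\le 5$ and $n_2=1$. If $n_1\ge 4$, then there is an optimal $3$-relaxed coloring $f$ of $G$ with $|f(V_1)|=1$. If $n_1=3$, then there is an optimal $3$-relaxed coloring of $G$ which assigns the same color to the three vertices of $V_1$ and the unique vertex of $V_2$.
   Context: A map $f$ from $V(G)$ to a finite set of colors is a $3$-relaxed coloring if every vertex $u$ has at most $3$ neighbors $v$ with $f(v)=f(u)$; it is optimal if it uses the minimum possible number $\chi_3(G)$ of colors. $f(S)$ denotes the set of colors used on $S$. *)

From mathcomp Require Import all_boot.
Set Implicit Arguments. Unset Strict Implicit. Unset Printing Implicit Defensive.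

(* Complete multipartite graph on a finite vertex type T: the part of a vertex
   is given by p : T -> 'I_s, and u ~ v iff they lie in different parts. *)
Definition cmp_adj (T : finType) (s : nat) (p : T -> 'I_s) : rel T :=
  fun u v => p u != p v.

(* The j-th part (0-indexed: part j here is V_{j+1} of the paper). *)
Definition part (T : finType) (s : nat) (p : T -> 'I_s) (j : nat) : {set T} :=
  [set v | nat_of_ord (p v) == j].

Definition relaxed3 (T C : finType) (e : rel T) (f : T -> C) : Prop :=
  forall u : T, #|[set v | e u v & f v == f u]| <= 3.

Definition colors_on (T C : finType) (f : T -> C) (S : {set T}) : {set C} :=
  f @: S.

Definition ncolors (T C : finType) (f : T -> C) : nat := #|colors_on f [set: T]|.

Definition optimal3 (T C : finType) (e : rel T) (f : T -> C) : Prop :=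
  relaxed3 e f /\
  forall (C' : finType) (g : T -> C'), relaxed3 e g -> ncolors f <= ncolors g.

From mathcomp Require Import all_boot zify.
Set Implicit Arguments. Unset Strict Implicit.

(* If n_2 = 1, every vertex outside V_1 is adjacent to all other vertices, so
   its color class in a 3-relaxed coloring has at most 4 vertices. Hence with
   k colors either some color misses V_2 u ... u V_s, and then
   n - n_1 <= 4(k - 1), or every class meets it, and then n <= 4k. Coloring
   the parts in consecutive blocks of four, V_1 alone in the first block when
   n_1 >= 4, or V_1 together with V_2 when n_1 = 3, meets this bound. *)

Lemma card_le_fibers (T C : finType) (g : T -> C) (A : {set T}) m :
  (forall x, x \in A -> #|[set y in A | g y == g x]| <= m) ->
  #|A| <= #|g @: A| * m.
Proof.
move=> fiber_le; rewrite -sum1_card (partition_big_imset g) /= -sum_nat_const.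
apply: leq_sum => _ /imsetP[x xA ->]; rewrite sum1_card.
by apply: leq_trans (fiber_le x xA); rewrite cardsE.
Qed.

Lemma card_ord_interval n (A : {set 'I_n}) a b :
  (forall i, i \in A -> a <= i < b) -> #|A| <= b - a.
Proof.
move=> A_ab; rewrite cardE -(size_map val) -(size_iota a (b - a)).
apply: uniq_leq_size; first by rewrite (map_inj_uniq val_inj) enum_uniq.
move=> _ /mapP[i iA ->]; rewrite mem_enum in iA.
case/andP: (A_ab i iA) => ai ib.
by rewrite mem_iota ai subnKC // (leq_trans ai (ltnW ib)).
Qed.

Section RelaxedColorings.

Variables (T C : finType) (e : rel T) (f : T -> C).

Lemma relaxed3_of_classes :
  irreflexive e ->
  (forall u, #|[set v | f v == f u]| <= 4 \/ forall v, f v = f u -> ~~ e u v) ->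
  relaxed3 e f.
Proof.
move=> e_irr class_ok u; case: (class_ok u) => [class_le4 | class_indep].
  have sub : [set v | e u v & f v == f u] \subset [set v | f v == f u] :\ u.
    apply/subsetP => v; rewrite !inE => /andP[euv ->]; rewrite andbT.
    by apply: contraTneq euv => ->; rewrite e_irr.
  apply: leq_trans (subset_leq_card sub) _.
  by move: class_le4; rewrite (cardsD1 u) inE eqxx.
rewrite (_ : [set v | _] = set0) ?cards0 //; apply/setP => v; rewrite !inE.
by case: eqP => [/class_indep/negbTE -> | _]; rewrite ?andbF.
Qed.

Lemma relaxed3_universal_class w :
  relaxed3 e f -> (forall v, v != w -> e w v) -> #|[set v | f v == f w]| <= 4.
Proof.
move=> f_rel w_univ.
have sub : [set v | f v == f w] \subset w |: [set v | e w v & f v == f w].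
  apply/subsetP => v; rewrite !inE => ->; rewrite andbT.
  by case: eqVneq => // /w_univ ->.
apply: leq_trans (subset_leq_card sub) _.
by rewrite cardsU1 (leq_add (leq_b1 _) (f_rel w)).
Qed.

Lemma relaxed3_ncolors_lb (W : {set T}) :
  relaxed3 e f -> (forall w v, w \in W -> v != w -> e w v) ->
  #|W| + 4 <= 4 * ncolors f \/ #|T| <= 4 * ncolors f.
Proof.
move=> f_rel W_univ.
have class_le4 w : w \in W -> #|[set v | f v == f w]| <= 4.
  by move=> wW; apply: relaxed3_universal_class => // v; apply: W_univ.
have fiber_le4 (A : {set T}) x : f x \in f @: W ->
    #|[set y in A | f y == f x]| <= 4.
  case/imsetP=> w wW ->; apply: leq_trans (class_le4 w wW).
  by apply: subset_leq_card; apply/subsetP => y; rewrite !inE => /andP[].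
have W_le : #|W| <= #|f @: W| * 4.
  by apply: card_le_fibers => x xW; apply: fiber_le4; apply: imset_f.
rewrite /ncolors /colors_on.
case: (eqVproper (imsetS f (subsetT W))) => [W_all | /proper_card W_few].
  right; rewrite -cardsT mulnC; apply: card_le_fibers => x _.
  by apply: fiber_le4; rewrite W_all imset_f ?inE.
by left; move: W_few W_le; lia.
Qed.

End RelaxedColorings.

Section CompleteMultipartite.

Variables (T : finType) (s : nat) (p : T -> 'I_s).

Lemma cmp_adj_irrefl : irreflexive (cmp_adj p).
Proof. by move=> u; rewrite /cmp_adj eqxx. Qed.

Lemma card_part0C :
  (forall j, j < s -> 0 < #|part p j|) -> s.-1 <= #|~: part p 0|.
Proof.
move=> nonempty; set P := [set j : 'I_s | 0 < j].
have P_sub : P \subset p @: ~: part p 0.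
  apply/subsetP => j; rewrite inE => j_pos.
  have /card_gt0P[v] := nonempty j (ltn_ord j); rewrite inE => /eqP pv.
  by apply/imsetP; exists v; [rewrite !inE pv -lt0n | apply: val_inj].
have PC_le1 : #|~: P| <= 1.
  apply/card_le1_eqP => i j; rewrite !inE -!eqn0Ngt => /eqP i0 /eqP j0.
  by apply: val_inj; rewrite /= i0 j0.
have := cardsC P; rewrite card_ord.
have := subset_leq_card P_sub; have := leq_imset_card p (~: part p 0); lia.
Qed.

Lemma pos_parts_singleton :
  (forall i j, i <= j -> j < s -> #|part p j| <= #|part p i|) ->
  #|part p 1| = 1 -> forall u v, 0 < p u -> p u = p v -> u = v.
Proof.
move=> sorted_parts part1 u v u_pos puv.
have : #|part p (p u)| <= 1 by rewrite -part1; apply: sorted_parts.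
by move/card_le1_eqP; apply; rewrite inE ?puv.
Qed.

Hypothesis parts_singleton : forall u v, 0 < p u -> p u = p v -> u = v.

Lemma cmp_adj_universal w v : 0 < p w -> v != w -> cmp_adj p w v.
Proof.
move=> w_pos; apply: contraNN => /eqP pwv.
by rewrite (parts_singleton w_pos pwv).
Qed.

Lemma card_parts_interval (V : {set T}) a b :
  0 < a -> (forall v, v \in V -> a <= p v < b) -> #|V| <= b - a.
Proof.
move=> a_pos V_ab; rewrite -(@card_in_imset _ _ p).
  by apply: card_ord_interval => _ /imsetP[v vV ->]; apply: V_ab.
move=> u v uV _; apply: parts_singleton.
by case/andP: (V_ab u uV) => /(leq_trans a_pos).
Qed.

Variable d : nat.
Hypothesis d_le3 : d <= 3.

Definition block_color (v : T) : 'I_s.+1 := inord ((p v + d) %/ 4).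

Lemma block_color_eq u v :
  (block_color u == block_color v) = ((p u + d) %/ 4 == (p v + d) %/ 4).
Proof.
have block_lt w : (p w + d) %/ 4 < s.+1 by have := ltn_ord (p w); lia.
by rewrite /block_color -val_eqE /= !inordK.
Qed.

Lemma block_color_small v : p v + d < 4 -> block_color v = inord 0.
Proof. by move=> small; rewrite /block_color divn_small. Qed.

Lemma ncolors_block_color : ncolors block_color <= (s - 1 + d) %/ 4 + 1.
Proof.
rewrite -[X in _ <= X]subn0; apply: card_ord_interval => _ /imsetP[v _ ->].
by rewrite /block_color inordK; have := ltn_ord (p v); lia.
Qed.

Lemma block_color_relaxed3 :
  d = 3 \/ #|part p 0| <= d.+1 -> relaxed3 (cmp_adj p) block_color.
Proof.
move=> d_ok; apply: relaxed3_of_classes cmp_adj_irrefl _ => u.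
set b := (p u + d) %/ 4.
have classE :
    [set v | block_color v == block_color u] = [set v | (p v + d) %/ 4 == b].
  by apply/setP => v; rewrite !inE block_color_eq.
rewrite classE; set K := [set v | _].
have K_pos : #|K :\: part p 0| <= (4 * b + 4 - d) - maxn 1 (4 * b - d).
  apply: card_parts_interval => [|v]; first by rewrite leq_max.
  by rewrite !inE => /andP[p0 /eqP vb]; lia.
have K_part0 : #|K :&: part p 0| <= (b == 0) * #|part p 0|.
  case: eqP => [_ | b_pos]; first by rewrite mul1n subset_leq_card ?subsetIr.
  rewrite leqn0 cards_eq0; apply/eqP/setP => v; rewrite !inE.
  by apply/negbTE; apply/nandP; case: eqP => //; lia.
have := cardsID (part p 0) K.
case: d_ok => [d3 | n0_le]; last by left; lia.
case: (posnP b) => [b0 | b_pos]; last by left; lia.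
right => v /eqP; rewrite block_color_eq /cmp_adj negbK => /eqP vu.
by apply/eqP/val_inj; move: vu; rewrite /= -/b b0 d3; lia.
Qed.

Lemma block_color_optimal :
  (forall j, j < s -> 0 < #|part p j|) -> d < #|part p 0| ->
  d = 3 \/ #|part p 0| <= d.+1 -> optimal3 (cmp_adj p) block_color.
Proof.
move=> nonempty n0_gt d_ok; split; first exact: block_color_relaxed3.
move=> C g g_rel.
have part0C_universal w v : w \in ~: part p 0 -> v != w -> cmp_adj p w v.
  by rewrite !inE -lt0n; apply: cmp_adj_universal.
have := relaxed3_ncolors_lb g_rel part0C_universal.
have := card_part0C nonempty; have := ncolors_block_color; have := cardsC (part p 0).
lia.
Qed.

End CompleteMultipartite.

Theorem lemma5p5 (T : finType) (s : nat) (p : T -> 'I_s) :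
  2 <= s ->
  (forall j, j < s -> 0 < #|part p j|) ->
  (forall i j, i <= j -> j < s -> #|part p j| <= #|part p i|) ->
  3 <= #|part p 0| <= 5 ->
  #|part p 1| = 1 ->
  (4 <= #|part p 0| ->
     exists (C : finType) (f : T -> C),
       optimal3 (cmp_adj p) f /\ #|colors_on f (part p 0)| = 1) /\
  (#|part p 0| = 3 ->
     exists (C : finType) (f : T -> C),
       optimal3 (cmp_adj p) f /\
       forall u v, u \in part p 0 :|: part p 1 -> v \in part p 0 :|: part p 1 ->
         f u = f v).
Proof.
move=> s_ge2 nonempty sorted_parts _ part1.
have singleton := pos_parts_singleton sorted_parts part1.
have [v0 v0_part0] : exists v0, v0 \in part p 0.
  by apply/card_gt0P/nonempty/ltnW.
have part0_small v : v \in part p 0 -> block_color p 3 v = inord 0.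
  by rewrite inE => /eqP pv; rewrite block_color_small ?pv.
split => [n0_ge4 | n0_eq3].
  exists _, (block_color p 3); split.
    by apply: block_color_optimal => //; left.
  have -> : colors_on (block_color p 3) (part p 0) = [set inord 0].
    apply/setP => c; rewrite inE; apply/imsetP/eqP => [[v v_part0 ->] | ->].
      exact: part0_small.
    by exists v0; rewrite ?part0_small.
  exact: cards1.
exists _, (block_color p 2); split.
  by apply: block_color_optimal => //; rewrite n0_eq3 //; right.
have part01_small v : v \in part p 0 :|: part p 1 -> block_color p 2 v = inord 0.
  by rewrite !inE => /orP[] /eqP pv; rewrite block_color_small ?pv.
by move=> u v /part01_small -> /part01_small ->.
Qed.
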